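(* Under the standing assumptions below, exactly one of the following holds: either there exist a map $u_1:M\to M'$ and a fixed $b'_1\in N'$ such that $\phi\left(\left[\begin{smallmatrix} 1 & m\\ 0 & 0\end{smallmatrix}\right]\right)=\left[\begin{smallmatrix} 1 & u_1(m)\\ b'_1 & 0\end{smallmatrix}\right]$ for all $m\in M$; or there exist a map $v_2:M\to N'$ and a fixed $a'_2\in M'$ such that $\phi\left(\left[\begin{smallmatrix} 1 & m\\ 0 & 0\end{smallmatrix}\right]\right)=\left[\begin{smallmatrix} 0 & a'_2\\ v_2(m) & 1\end{smallmatrix}\right]$ for all $m\in M$.
   Context: All rings have an identity $1\neq 0$. Standing assumptions: $R,S,R',S'$ are rings whose only idempotents are $0$ and $1$; $M$ is an $R$-$S$-bimodule, $N$ an $S$-$R$-bimodule, $M'$ an $R'$-$S'$-bimodule, $N'$ an $S'$-$R'$-bimodule; $T=\left[\begin{smallmatrix} R & M\\ N & S\end{smallmatrix}\right]$ and $T'=\left[\begin{smallmatrix} R' & M'\\ N' & S'\end{smallmatrix}\right]$ are the Morita context rings with both Morita maps zero, i.e. the sets of formal matrices with entrywise addition and product $\left[\begin{smallmatrix} r & m\\ n & s\end{smallmatrix}\right]\left[\begin{smallmatrix} r' & m'\\ n' & s'\end{smallmatrix}\right]=\left[\begin{smallmatrix} rr' & rm'+ms'\\ nr'+sn' & ss'\end{smallmatrix}\right]$; and $\phi:T\to T'$ is a ring isomorphism. *)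

From HB Require Import structures.
From mathcomp Require Import all_boot all_order all_algebra.
Set Implicit Arguments. Unset Strict Implicit. Unset Printing Implicit Defensive.
Import GRing.Theory.
Local Open Scope ring_scope.

Definition only_trivial_idempotents (R : nzRingType) : Prop :=
  forall e : R, e * e = e -> e = 0 \/ e = 1.

Record bimodule (R S : nzRingType) (M : zmodType) := Bimodule {
  lact : R -> M -> M;
  ract : M -> S -> M;
  lact1 : forall m, lact 1 m = m;
  lactM : forall r1 r2 m, lact (r1 * r2) m = lact r1 (lact r2 m);
  lactDl : forall r1 r2 m, lact (r1 + r2) m = lact r1 m + lact r2 m;
  lactDr : forall r m1 m2, lact r (m1 + m2) = lact r m1 + lact r m2;
  ract1 : forall m, ract m 1 = m;
  ractM : forall m s1 s2, ract m (s1 * s2) = ract (ract m s1) s2;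
  ractDl : forall m1 m2 s, ract (m1 + m2) s = ract m1 s + ract m2 s;
  ractDr : forall m s1 s2, ract m (s1 + s2) = ract m s1 + ract m s2;
  lract : forall r m s, ract (lact r m) s = lact r (ract m s)
}.

(* Elements of the Morita context ring [[R, M], [N, S]] (both Morita maps zero). *)
Record mctx (R S : nzRingType) (M N : zmodType) := MC {
  m11 : R; m12 : M; m21 : N; m22 : S
}.

Section MoritaOps.
Variables (R S : nzRingType) (M N : zmodType).
Variables (BM : bimodule R S M) (BN : bimodule S R N).

Definition mc_add (x y : mctx R S M N) : mctx R S M N :=
  MC (m11 x + m11 y) (m12 x + m12 y) (m21 x + m21 y) (m22 x + m22 y).

Definition mc_mul (x y : mctx R S M N) : mctx R S M N :=
  MC (m11 x * m11 y)
     (lact BM (m11 x) (m12 y) + ract BM (m12 x) (m22 y))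
     (ract BN (m21 x) (m11 y) + lact BN (m22 x) (m21 y))
     (m22 x * m22 y).

Definition mc_one : mctx R S M N := MC 1 0 0 1.
End MoritaOps.

Definition mc_ring_iso (R S R' S' : nzRingType) (M N M' N' : zmodType)
  (BM : bimodule R S M) (BN : bimodule S R N)
  (BM' : bimodule R' S' M') (BN' : bimodule S' R' N')
  (phi : mctx R S M N -> mctx R' S' M' N') : Prop :=
  bijective phi /\
  (forall x y, phi (mc_add x y) = mc_add (phi x) (phi y)) /\
  (forall x y, phi (mc_mul BM BN x y) = mc_mul BM' BN' (phi x) (phi y)) /\
  phi (mc_one R S M N) = mc_one R' S' M' N'.

From HB Require Import structures.
From mathcomp Require Import all_boot all_order all_algebra.
Set Implicit Arguments. Unset Strict Implicit. Unset Printing Implicit Defensive.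
Import GRing.Theory.
Local Open Scope ring_scope.

(* For m in M put x_m = [[1, m], [0, 0]] in T.  Each x_m is
   an idempotent different from 0 and 1, and x_0 * x_m = x_m.
   1. In a Morita context ring with zero Morita maps over rings with only
      trivial idempotents, an idempotent other than 0 and 1 has diagonal
      (1, 0) ("upper corner") or (0, 1) ("lower corner"); the two cases
      exclude each other since 1 <> 0.
   2. If e and y are such idempotents and e * y = y, then y lies in the same
      corner as e and shares its off-diagonal entry in the row of the zero
      diagonal entry: an upper e forces y = [[1, *], [e_21, 0]], a lower e
      forces y = [[0, e_12], [*, 1]].
   3. A ring isomorphism phi preserves 0, 1, products and is injective, so
      the phi(x_m) are again idempotents other than 0 and 1 with
      phi(x_0) * phi(x_m) = phi(x_m).  Applying 2 with e = phi(x_0) gives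
      the first alternative when phi(x_0) is upper and the second when it is
      lower; exclusivity follows from 1 evaluated at m = 0. *)

Lemma double_eq0 {G : zmodType} {g : G} : g = g + g -> g = 0.
Proof. by move=> gg; apply: (addrI g); rewrite addr0 -gg. Qed.

Section BimoduleZero.
Variables (R S : nzRingType) (M : zmodType) (B : bimodule R S M).

Lemma lact0r (m : M) : lact B 0 m = 0.
Proof. by apply: double_eq0; rewrite -lactDl addr0. Qed.

Lemma lactr0 (r : R) : lact B r 0 = 0.
Proof. by apply: double_eq0; rewrite -lactDr addr0. Qed.

Lemma ract0r (m : M) : ract B m 0 = 0.
Proof. by apply: double_eq0; rewrite -ractDr addr0. Qed.

Lemma ractr0 (s : S) : ract B 0 s = 0.
Proof. by apply: double_eq0; rewrite -ractDl addr0. Qed.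

End BimoduleZero.

Lemma mc_eta (R S : nzRingType) (M N : zmodType) (x : mctx R S M N) :
  x = MC (m11 x) (m12 x) (m21 x) (m22 x).
Proof. by case: x. Qed.

Section MoritaIdempotents.
Variables (R S : nzRingType) (M N : zmodType).
Variables (BM : bimodule R S M) (BN : bimodule S R N).

Definition mc_zero : mctx R S M N := MC 0 0 0 0.

Definition mc_idempotent (x : mctx R S M N) : Prop := mc_mul BM BN x x = x.

Definition upper_corner (x : mctx R S M N) : Prop := m11 x = 1 /\ m22 x = 0.
Definition lower_corner (x : mctx R S M N) : Prop := m11 x = 0 /\ m22 x = 1.

Lemma corners_disjoint (x : mctx R S M N) :
  upper_corner x -> lower_corner x -> False.
Proof. by case=> up _ [low _]; move/eqP: (oner_neq0 R); rewrite -up low. Qed.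

Hypotheses (hR : only_trivial_idempotents R) (hS : only_trivial_idempotents S).

(* Step 1: the diagonal of a nontrivial idempotent is (1, 0) or (0, 1); the
   diagonal (0, 0) forces x = 0 and the diagonal (1, 1) forces x = 1. *)
Lemma idempotent_corner (x : mctx R S M N) :
  mc_idempotent x -> x <> mc_zero -> x <> mc_one R S M N ->
  upper_corner x \/ lower_corner x.
Proof.
case: x => a b c d E n0 n1; rewrite /upper_corner /lower_corner /=.
have Ea : a * a = a by have := f_equal (@m11 _ _ _ _) E.
have Eb : lact BM a b + ract BM b d = b by have := f_equal (@m12 _ _ _ _) E.
have Ec : ract BN c a + lact BN d c = c by have := f_equal (@m21 _ _ _ _) E.
have Ed : d * d = d by have := f_equal (@m22 _ _ _ _) E.
case: (hR Ea) => Ha; case: (hS Ed) => Hd; subst a d; auto; exfalso.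
- rewrite lact0r ract0r addr0 in Eb; rewrite ract0r lact0r addr0 in Ec.
  by apply: n0; rewrite -Eb -Ec.
- rewrite lact1 ract1 in Eb; rewrite ract1 lact1 in Ec.
  by apply: n1; rewrite /mc_one (double_eq0 (esym Eb)) (double_eq0 (esym Ec)).
Qed.

Section Absorption.
Variables (e y : mctx R S M N).
Hypotheses (y_corner : upper_corner y \/ lower_corner y)
           (ey : mc_mul BM BN e y = y).

(* Step 2, upper case: e * y = y kills the (2,2) entry of y, which puts y in
   the upper corner, and then the (2,1) entry of y equals that of e. *)
Lemma upper_absorb : upper_corner e -> y = MC 1 (m12 y) (m21 e) 0.
Proof.
case=> e11 e22.
have y22 : m22 y = 0 by rewrite -ey /mc_mul /= e22 mul0r.
have y11 : m11 y = 1.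
  by case: y_corner => [[]|[_ y22']] //; move: y22'; rewrite y22 => /esym/eqP;
     rewrite oner_eq0.
have y21 : m21 y = m21 e by rewrite -ey /mc_mul /= y11 e22 ract1 lact0r addr0.
by rewrite [LHS]mc_eta y11 y21 y22.
Qed.

Lemma lower_absorb : lower_corner e -> y = MC 0 (m12 e) (m21 y) 1.
Proof.
case=> e11 e22.
have y11 : m11 y = 0 by rewrite -ey /mc_mul /= e11 mul0r.
have y22 : m22 y = 1.
  by case: y_corner => [[y11' _]|[]] //; move: y11'; rewrite y11 => /esym/eqP;
     rewrite oner_eq0.
have y12 : m12 y = m12 e by rewrite -ey /mc_mul /= y22 e11 ract1 lact0r add0r.
by rewrite [LHS]mc_eta y11 y12 y22.
Qed.

End Absorption.
End MoritaIdempotents.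

Section RingIso.
Variables (R S R' S' : nzRingType) (M N M' N' : zmodType).
Variables (BM : bimodule R S M) (BN : bimodule S R N).
Variables (BM' : bimodule R' S' M') (BN' : bimodule S' R' N').
Variables (phi : mctx R S M N -> mctx R' S' M' N').
Hypothesis hphi : mc_ring_iso BM BN BM' BN' phi.

Lemma iso_zero : phi (mc_zero R S M N) = mc_zero R' S' M' N'.
Proof.
case: hphi => _ [Hadd _].
have := Hadd (mc_zero R S M N) (mc_zero R S M N).
rewrite /mc_add /= !addr0 -/(mc_zero R S M N) [phi _ in LHS]mc_eta.
case=> /double_eq0 h1 /double_eq0 h2 /double_eq0 h3 /double_eq0 h4.
by rewrite [LHS]mc_eta h1 h2 h3 h4.
Qed.

Lemma iso_nontrivial_idempotent (x : mctx R S M N) :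
  mc_idempotent BM BN x -> x <> mc_zero R S M N -> x <> mc_one R S M N ->
  [/\ mc_idempotent BM' BN' (phi x), phi x <> mc_zero R' S' M' N'
    & phi x <> mc_one R' S' M' N'].
Proof.
case: (hphi) => [[psi phiK _] [_ [Hmul Hone]]] xx x0 x1.
have inj : injective phi by exact: can_inj phiK.
split; first by rewrite /mc_idempotent -Hmul xx.
- by rewrite -iso_zero => /inj.
- by rewrite -Hone => /inj.
Qed.

End RingIso.

Theorem proposition4p3 (R S R' S' : nzRingType) (M N M' N' : zmodType)
  (BM : bimodule R S M) (BN : bimodule S R N)
  (BM' : bimodule R' S' M') (BN' : bimodule S' R' N')
  (hR : only_trivial_idempotents R) (hS : only_trivial_idempotents S)
  (hR' : only_trivial_idempotents R') (hS' : only_trivial_idempotents S')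
  (phi : mctx R S M N -> mctx R' S' M' N')
  (hphi : mc_ring_iso BM BN BM' BN' phi) :
  let A := exists (u1 : M -> M') (b1 : N'),
             forall m : M, phi (MC 1 m 0 0) = MC 1 (u1 m) b1 0 in
  let B := exists (v2 : M -> N') (a2 : M'),
             forall m : M, phi (MC 1 m 0 0) = MC 0 a2 (v2 m) 1 in
  (A /\ ~ B) \/ (~ A /\ B).
Proof.
move=> A B; set x := fun m : M => MC (1 : R) m (0 : N) (0 : S).
have x_absorb m n : mc_mul BM BN (x m) (x n) = x n.
  by rewrite /mc_mul /x /= mulr1 mulr0 lact1 ract0r ractr0 lactr0 !addr0.
have corner m : upper_corner (phi (x m)) \/ lower_corner (phi (x m)).
  have [||xx x0 x1] := iso_nontrivial_idempotent hphi (x_absorb m m).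
  - by move/(f_equal (@m11 _ _ _ _))/eqP; rewrite oner_eq0.
  - by move/(f_equal (@m22 _ _ _ _))/eqP; rewrite eq_sym oner_eq0.
  exact: (idempotent_corner hR' hS' xx x0 x1).
have phi_absorb m : mc_mul BM' BN' (phi (x 0)) (phi (x m)) = phi (x m).
  by case: hphi => _ [_ [Hmul _]]; rewrite -Hmul x_absorb.
case: (corner 0) => [up | low]; [left | right]; split.
- exists (fun m => m12 (phi (x m))), (m21 (phi (x 0))) => m.
  exact: upper_absorb (corner m) (phi_absorb m) up.
- by case=> v2 [a2 /(_ 0) E]; apply: (corners_disjoint up); rewrite /x E.
- by case=> u1 [b1 /(_ 0) E]; apply: (corners_disjoint _ low); rewrite /x E.
- exists (fun m => m21 (phi (x m))), (m12 (phi (x 0))) => m.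
  exact: lower_absorb (corner m) (phi_absorb m) low.
Qed.
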